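(* Let $a,b,e\in\mathbb{R}$ and let $\alpha_i(t)$ ($i=1,\dots,5$) be scalar continuous functions (not necessarily odd). Consider the systems $$\text{(S5)}\quad\begin{aligned}\dot x&=(ax+by+xz)(1+\alpha_1(t))+x(a+z)\alpha_2(t)+y\alpha_3(t),\\ \dot y&=(-bx+ay+yz)(1+\alpha_1(t))+y(a+z)\alpha_2(t)-x\alpha_3(t),\\ \dot z&=(ez-x^2-y^2-z^2)(1+\alpha_1(t)+\alpha_2(t));\end{aligned}$$ $$\text{(S6)}\quad\begin{aligned}\dot x&=(ax+by+xz)(1+\alpha_1(t))+x(a+z)\alpha_2(t)+y\alpha_3(t)-y(x^2+y^2)(4az+x^2+y^2+2z^2)\alpha_4(t),\\ \dot y&=(-bx+ay+yz)(1+\alpha_1(t))+y(a+z)\alpha_2(t)-x\alpha_3(t)+x(x^2+y^2)(4az+x^2+y^2+2z^2)\alpha_4(t),\\ \dot z&=-(2az+x^2+y^2+z^2)(1+\alpha_1(t)+\alpha_2(t));\end{aligned}$$ $$\text{(S7)}\quad\begin{aligned}\dot x&=(ax+xz)(1+\alpha_1(t))+y\alpha_2(t)+y(4az+x^2+y^2+2z^2)\big(x^2\alpha_3(t)+xy\alpha_4(t)+y^2\alpha_5(t)\big),\\ \dot y&=(ay+yz)(1+\alpha_1(t))-x\alpha_2(t)-x(4az+x^2+y^2+2z^2)\big(x^2\alpha_3(t)+xy\alpha_4(t)+y^2\alpha_5(t)\big),\\ \dot z&=-(2az+x^2+y^2+z^2)(1+\alpha_1(t)).\end{aligned}$$ (i)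 If $e=0$ and there is a constant $l>-1$ with $\alpha_1(t)+\alpha_2(t)\ge l$ for all $t\ge0$, then the solution $x=y=z=0$ of (S5) is unstable in the sense of Lyapunov. (ii) If $a=0$ and there is a constant $l>-1$ with $\alpha_1(t)+\alpha_2(t)\ge l$ for all $t\ge0$, then the solution $x=y=z=0$ of (S6) is unstable in the sense of Lyapunov. (iii) If $a=0$ and there is a constant $l>-1$ with $\alpha_1(t)\ge l$ for all $t\ge0$, then the solution $x=y=z=0$ of (S7) is unstable in the sense of Lyapunov. *)

From Stdlib Require Import Reals.
From Coquelicot Require Import Coquelicot.
Open Scope R_scope.

Definition field3 := R -> R -> R -> R -> R.

(* (x,y,z) is a solution of x' = F, y' = G, z' = H on [0, T)  (T may be any
   real; solutions need not be global). *)
Definition is_sol3 (F G H : field3) (T : R) (x y z : R -> R) : Prop :=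
  forall t, 0 <= t < T ->
    is_derive x t (F t (x t) (y t) (z t)) /\
    is_derive y t (G t (x t) (y t) (z t)) /\
    is_derive z t (H t (x t) (y t) (z t)).

Definition norm3 (x y z : R) : R := sqrt (x ^ 2 + y ^ 2 + z ^ 2).

Definition lyapunov_stable0 (F G H : field3) : Prop :=
  forall eps, 0 < eps -> exists delta, 0 < delta /\
    forall T x y z, is_sol3 F G H T x y z ->
      norm3 (x 0) (y 0) (z 0) < delta ->
      forall t, 0 <= t < T -> norm3 (x t) (y t) (z t) < eps.

Definition lyapunov_unstable0 (F G H : field3) : Prop := ~ lyapunov_stable0 F G H.

Definition S5x (a b : R) (al1 al2 al3 : R -> R) : field3 := fun t x y z =>
  (a*x + b*y + x*z) * (1 + al1 t) + x*(a + z) * al2 t + y * al3 t.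
Definition S5y (a b : R) (al1 al2 al3 : R -> R) : field3 := fun t x y z =>
  (- b*x + a*y + y*z) * (1 + al1 t) + y*(a + z) * al2 t - x * al3 t.
Definition S5z (e : R) (al1 al2 : R -> R) : field3 := fun t x y z =>
  (e*z - x^2 - y^2 - z^2) * (1 + al1 t + al2 t).

Definition S6x (a b : R) (al1 al2 al3 al4 : R -> R) : field3 := fun t x y z =>
  (a*x + b*y + x*z) * (1 + al1 t) + x*(a + z) * al2 t + y * al3 t
  - y * (x^2 + y^2) * (4*a*z + x^2 + y^2 + 2*z^2) * al4 t.
Definition S6y (a b : R) (al1 al2 al3 al4 : R -> R) : field3 := fun t x y z =>
  (- b*x + a*y + y*z) * (1 + al1 t) + y*(a + z) * al2 t - x * al3 t
  + x * (x^2 + y^2) * (4*a*z + x^2 + y^2 + 2*z^2) * al4 t.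
Definition S6z (a : R) (al1 al2 : R -> R) : field3 := fun t x y z =>
  - (2*a*z + x^2 + y^2 + z^2) * (1 + al1 t + al2 t).

Definition S7x (a : R) (al1 al2 al3 al4 al5 : R -> R) : field3 := fun t x y z =>
  (a*x + x*z) * (1 + al1 t) + y * al2 t
  + y * (4*a*z + x^2 + y^2 + 2*z^2) * (x^2 * al3 t + x*y * al4 t + y^2 * al5 t).
Definition S7y (a : R) (al1 al2 al3 al4 al5 : R -> R) : field3 := fun t x y z =>
  (a*y + y*z) * (1 + al1 t) - x * al2 t
  - x * (4*a*z + x^2 + y^2 + 2*z^2) * (x^2 * al3 t + x*y * al4 t + y^2 * al5 t).
Definition S7z (a : R) (al1 : R -> R) : field3 := fun t x y z =>
  - (2*a*z + x^2 + y^2 + z^2) * (1 + al1 t).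

Definition cont (f : R -> R) : Prop := forall t, continuity_pt f t.

(* On the z-axis all three systems reduce to the Riccati equation
   z' = - c(t) z^2, where c = 1 + al1 + al2 (resp. 1 + al1) satisfies
   c >= m := 1 + l > 0.  With C the primitive of c vanishing at 0, the function
   z(s) = 1 / (C(s) - C(T)) solves it on [0, T); it starts at -1/C(T), which has
   size at most 1/(m T), and blows up as s -> T because C(s) - C(T) <= -m (T - s)
   < 0 tends to 0.  Taking T large gives arbitrarily small initial data whose
   solutions leave the unit ball. *)
From Stdlib Require Import Reals Lra.
From Coquelicot Require Import Coquelicot.
Open Scope R_scope.

Section Riccati.

Variable c : R -> R.
Hypothesis c_cont : forall t, continuity_pt c t.

Definition antider (t : R) : R := RInt c 0 t.

Lemma ex_RInt_cont (a b : R) : ex_RInt c a b.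
Proof.
  apply (@ex_RInt_continuous R_CompleteNormedModule); intros.
  now apply continuity_pt_filterlim.
Qed.

Lemma antider0 : antider 0 = 0.
Proof. apply (@RInt_point R_CompleteNormedModule). Qed.

Lemma is_derive_antider (t : R) : is_derive antider t (c t).
Proof.
  apply is_derive_RInt with (a := 0).
  - apply filter_forall; intro b; apply (RInt_correct c 0 b), ex_RInt_cont.
  - now apply continuity_pt_filterlim.
Qed.

Lemma continuity_pt_antider (t : R) : continuity_pt antider t.
Proof.
  apply continuity_pt_filterlim, (@ex_derive_continuous R_AbsRing R_NormedModule).
  exists (c t); apply is_derive_antider.
Qed.

Lemma antider_increment (m a b : R) :
  (forall t, 0 <= t -> m <= c t) -> 0 <= a <= b ->
  m * (b - a) <= antider b - antider a.
Proof.
  intros c_ge Hab.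
  replace (antider b - antider a) with (RInt c a b).
  2: { unfold antider; rewrite <- (RInt_Chasles c 0 a b) by apply ex_RInt_cont.
       unfold plus; simpl; lra. }
  replace (m * (b - a)) with (RInt (fun _ => m) a b).
  2: { rewrite RInt_const; unfold scal; simpl; unfold mult; simpl; lra. }
  apply RInt_le; try lra; [apply ex_RInt_const | apply ex_RInt_cont |].
  intros x Hx; apply c_ge; lra.
Qed.

Lemma is_derive_riccati (K s : R) : antider s <> K ->
  is_derive (fun u => / (antider u - K)) s (- (/ (antider s - K)) ^ 2 * c s).
Proof.
  intros HsK.
  assert (Hshift : is_derive (fun u => antider u - K) s (c s)).
  { replace (c s) with (c s - 0) by ring.
    apply @is_derive_minus; [apply is_derive_antider |].
    apply (@is_derive_const R_AbsRing R_NormedModule). }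
  pose proof (is_derive_inv _ _ _ Hshift ltac:(lra)) as Hinv.
  replace (- (/ (antider s - K)) ^ 2 * c s) with (- c s / (antider s - K) ^ 2)
    by (field; lra).
  exact Hinv.
Qed.

Variable m : R.
Hypothesis m_pos : 0 < m.
Hypothesis c_ge_m : forall t, 0 <= t -> m <= c t.

Lemma antider_lt (s T : R) : 0 <= s < T -> antider s < antider T.
Proof.
  intros Hs.
  pose proof (antider_increment m s T c_ge_m ltac:(lra)).
  assert (0 < m * (T - s)) by (apply Rmult_lt_0_compat; lra).
  lra.
Qed.

Lemma riccati_blowup (T eps : R) : 0 < T -> 0 < eps ->
  exists t, 0 <= t < T /\ eps <= Rabs (/ (antider t - antider T)).
Proof.
  intros HT Heps.
  destruct (continuity_pt_antider T (/ eps)) as [r [Hr Hnear]].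
  { now apply Rinv_0_lt_compat. }
  set (t := Rmax 0 (T - r / 2)).
  assert (Ht : 0 <= t < T) by (split; [apply Rmax_l | apply Rmax_lub_lt; lra]).
  assert (Hclose : T - t < r) by (pose proof (Rmax_r 0 (T - r / 2)); unfold t; lra).
  clearbody t; exists t; split; [exact Ht |].
  assert (Hdist : Rabs (antider t - antider T) < / eps).
  { apply (Hnear t); split; [split; [exact I | intro; lra] |].
    simpl; unfold R_dist; rewrite Rabs_left1; lra. }
  pose proof (antider_lt t T Ht).
  rewrite Rabs_left1 in Hdist by lra.
  rewrite Rabs_inv, Rabs_left by lra.
  rewrite <- (Rinv_inv eps).
  apply Rinv_le_contravar; lra.
Qed.

Lemma riccati_small_start_blowup (eps delta : R) : 0 < eps -> 0 < delta ->
  exists T (z : R -> R),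
    Rabs (z 0) < delta /\
    (forall s, 0 <= s < T -> is_derive z s (- (z s) ^ 2 * c s)) /\
    exists t, 0 <= t < T /\ eps <= Rabs (z t).
Proof.
  intros Heps Hdelta.
  set (T := 2 / (m * delta)).
  assert (HT : 0 < T) by (unfold T; apply Rdiv_lt_0_compat; [lra | nra]).
  assert (HCT : 2 / delta <= antider T).
  { pose proof (antider_increment m 0 T c_ge_m ltac:(lra)) as Hinc.
    rewrite antider0 in Hinc.
    replace (2 / delta) with (m * (T - 0)) by (unfold T; field; lra).
    lra. }
  assert (Hpos : 0 < 2 / delta) by (apply Rdiv_lt_0_compat; lra).
  exists T, (fun s => / (antider s - antider T)); split; [| split].
  - rewrite antider0, Rminus_0_l, Rinv_opp, Rabs_Ropp, Rabs_pos_eq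
      by (apply Rlt_le, Rinv_0_lt_compat; lra).
    apply Rle_lt_trans with (/ (2 / delta)); [apply Rinv_le_contravar; lra |].
    rewrite Rinv_div; lra.
  - intros s Hs; apply is_derive_riccati.
    pose proof (antider_lt s T Hs); lra.
  - now apply riccati_blowup.
Qed.

End Riccati.

Lemma norm3_axis (z : R) : norm3 0 0 z = Rabs z.
Proof.
  unfold norm3; rewrite <- sqrt_Rsqr_abs; f_equal; unfold Rsqr; ring.
Qed.

Lemma lyapunov_unstable0_of_riccati_axis (F G H : field3) (c : R -> R) (m : R) :
  (forall t, continuity_pt c t) -> 0 < m -> (forall t, 0 <= t -> m <= c t) ->
  (forall t z, F t 0 0 z = 0) -> (forall t z, G t 0 0 z = 0) ->
  (forall t z, H t 0 0 z = - z ^ 2 * c t) ->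
  lyapunov_unstable0 F G H.
Proof.
  intros Hc Hm Hcm HF HG HH Hstable.
  destruct (Hstable 1 Rlt_0_1) as [delta [Hdelta Hball]].
  destruct (riccati_small_start_blowup c Hc m Hm Hcm 1 delta Rlt_0_1 Hdelta)
    as [T [z [Hz0 [Hz [t [Ht Hzt]]]]]].
  assert (Hsol : is_sol3 F G H T (fun _ => 0) (fun _ => 0) z).
  { intros s Hs; rewrite HF, HG, HH.
    split; [| split]; [apply (@is_derive_const R_AbsRing R_NormedModule) ..|].
    now apply Hz. }
  rewrite <- norm3_axis in Hz0.
  specialize (Hball T _ _ _ Hsol Hz0 t Ht); rewrite norm3_axis in Hball; lra.
Qed.

Lemma lyapunov_unstable0_of_riccati_axis_shift (F G H : field3) (f : R -> R) :
  cont f -> (exists l, l > -1 /\ forall t, 0 <= t -> f t >= l) ->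
  (forall t z, F t 0 0 z = 0) -> (forall t z, G t 0 0 z = 0) ->
  (forall t z, H t 0 0 z = - z ^ 2 * (1 + f t)) ->
  lyapunov_unstable0 F G H.
Proof.
  intros Hf [l [Hl Hfl]].
  apply (lyapunov_unstable0_of_riccati_axis F G H (fun t => 1 + f t) (1 + l)).
  - intro t; apply continuity_pt_plus; [apply continuity_pt_const; now intros ? ? | apply Hf].
  - lra.
  - intros t Ht; specialize (Hfl t Ht); lra.
Qed.

Lemma cont_plus (f g : R -> R) : cont f -> cont g -> cont (fun s => f s + g s).
Proof. intros Hf Hg t; now apply continuity_pt_plus. Qed.

Theorem theorem3 :
  (* (i) *)
  (forall (a b e : R) (al1 al2 al3 : R -> R),
     cont al1 -> cont al2 -> cont al3 ->
     e = 0 ->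
     (exists l, l > -1 /\ forall t, 0 <= t -> al1 t + al2 t >= l) ->
     lyapunov_unstable0 (S5x a b al1 al2 al3) (S5y a b al1 al2 al3)
                        (S5z e al1 al2)) /\
  (* (ii) *)
  (forall (a b : R) (al1 al2 al3 al4 : R -> R),
     cont al1 -> cont al2 -> cont al3 -> cont al4 ->
     a = 0 ->
     (exists l, l > -1 /\ forall t, 0 <= t -> al1 t + al2 t >= l) ->
     lyapunov_unstable0 (S6x a b al1 al2 al3 al4) (S6y a b al1 al2 al3 al4)
                        (S6z a al1 al2)) /\
  (* (iii) *)
  (forall (a : R) (al1 al2 al3 al4 al5 : R -> R),
     cont al1 -> cont al2 -> cont al3 -> cont al4 -> cont al5 ->
     a = 0 ->
     (exists l, l > -1 /\ forall t, 0 <= t -> al1 t >= l) ->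
     lyapunov_unstable0 (S7x a al1 al2 al3 al4 al5) (S7y a al1 al2 al3 al4 al5)
                        (S7z a al1)).
Proof.
  split; [| split].
  - intros a b e al1 al2 al3 H1 H2 _ -> Hl.
    apply (lyapunov_unstable0_of_riccati_axis_shift _ _ _ (fun t => al1 t + al2 t));
      [now apply cont_plus | exact Hl | intros; unfold S5x, S5y, S5z; ring ..].
  - intros a b al1 al2 al3 al4 H1 H2 _ _ -> Hl.
    apply (lyapunov_unstable0_of_riccati_axis_shift _ _ _ (fun t => al1 t + al2 t));
      [now apply cont_plus | exact Hl | intros; unfold S6x, S6y, S6z; ring ..].
  - intros a al1 al2 al3 al4 al5 H1 _ _ _ _ -> Hl.
    apply (lyapunov_unstable0_of_riccati_axis_shift _ _ _ al1);
      [exact H1 | exact Hl | intros; unfold S7x, S7y, S7z; ring ..].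
Qed.
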